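(* Let $k$ be a positive integer, $a=6k+5$, $b=a+\frac{a-3}{2}$, $c=b+1$, $S=\{a,b,c\}$, $G=\langle S\rangle$. For $i\in[0,k]$ let $A_{i,k}=([a,a+3i]\cup[b,b+1+3i]\cup[2a,2a+3i])+\{2ib\}$, $B_{i,k}=([a,a+1+3i]\cup[b,b+3+3i]\cup[2a,2a+1+3i])+\{(2i+1)b\}$, $I_{i,k}=A_{i,k}\cup B_{i,k}$; let $C=[2a+2kb,\infty[$ and $H_{13,k}=\{0\}\cup\bigcup_{i=0}^{k}I_{i,k}\cup C$. Then: (1) $H_{13,k}$ is a co-finite submonoid of $G$ containing $S$; (2) $H_{13,k}$ is a $3$-permutation numerical semigroup.
   Context: $\mathbb{N}=\{0,1,2,\dots\}$. A numerical semigroup is a submonoid $G$ of $(\mathbb{N},+,0)$ with $\mathbb{N}\setminus G$ finite; $\langle S\rangle$ is the submonoid generated by $S$. Writing the elements of a numerical semigroup as $0=g_0<g_1<g_2<\cdots$, it is an $n$-permutation numerical semigroup if it is generated by $\{g_1,\dots,g_n\}$ and for every $k\in\mathbb{N}$ the tuple $(g_{kn+1}\bmod n,\dots,g_{kn+n}\bmod n)$ contains exactly one representative of each residue class mod $n$. Notation: $[u,v]=\{x\in\mathbb{N}:u\le x\le v\}$, $[u,\infty[=\{x\in\mathbb{N}:x\ge u\}$; $X+Y=\{x+y:x\in X,y\in Y\}$. *)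

From mathcomp Require Import all_boot.
Set Implicit Arguments. Unset Strict Implicit. Unset Printing Implicit Defensive.

Definition submonoid (H : nat -> Prop) : Prop :=
  H 0 /\ forall x y, H x -> H y -> H (x + y).

Definition cofinite (H : nat -> Prop) : Prop :=
  exists N, forall x, N <= x -> H x.

Definition numerical_semigroup (H : nat -> Prop) : Prop :=
  submonoid H /\ cofinite H.

Definition generated (S : nat -> Prop) : nat -> Prop :=
  fun x => forall M, submonoid M -> (forall s, S s -> M s) -> M x.

Definition enumerates (G : nat -> Prop) (g : nat -> nat) : Prop :=
  (forall i j, i < j -> g i < g j) /\ (forall x, G x <-> exists i, g i = x).

Definition perm_num_semigroup (n : nat) (G : nat -> Prop) : Prop :=
  numerical_semigroup G /\
  exists g : nat -> nat, enumerates G g /\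
    (forall x, G x <-> generated (fun s => exists2 j, 0 < j <= n & g j = s) x) /\
    (forall k, perm_eq [seq g (k * n + j) %% n | j <- iota 1 n] (iota 0 n)).

Definition in_shift (u v t x : nat) : bool := (u + t <= x) && (x <= v + t).

Definition a_of (k : nat) : nat := 6 * k + 5.
Definition b_of (k : nat) : nat := a_of k + (a_of k - 3) %/ 2.
Definition c_of (k : nat) : nat := b_of k + 1.

Definition S_of (k : nat) : nat -> Prop :=
  fun x => x = a_of k \/ x = b_of k \/ x = c_of k.

Definition A_ik (i k x : nat) : bool :=
  let a := a_of k in let b := b_of k in let t := 2 * i * b in
  [|| in_shift a (a + 3 * i) t x, in_shift b (b + 1 + 3 * i) t x
    | in_shift (2 * a) (2 * a + 3 * i) t x].

Definition B_ik (i k x : nat) : bool :=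
  let a := a_of k in let b := b_of k in let t := (2 * i + 1) * b in
  [|| in_shift a (a + 1 + 3 * i) t x, in_shift b (b + 3 + 3 * i) t x
    | in_shift (2 * a) (2 * a + 1 + 3 * i) t x].

Definition I_ik (i k x : nat) : bool := A_ik i k x || B_ik i k x.

Definition C_k (k x : nat) : bool := 2 * a_of k + 2 * k * b_of k <= x.

Definition H13 (k : nat) : nat -> Prop :=
  fun x => x = 0 \/ (exists2 i, i <= k & I_ik i k x) \/ C_k k x.

From mathcomp Require Import all_boot zify.
Set Implicit Arguments. Unset Strict Implicit. Unset Printing Implicit Defensive.

(* Write a = 6k+5, b = 9k+6, c = b+1.  Above a, the set H_{13,k} is cut into blocks
   [a + 2bi, a + 2b(i+1)[.  For i < k block i consists of six runs starting at the
   offsets 0, b-a, a, b, 2b-a, a+b, of lengths 3i+1, 3i+2, 3i+1, 3i+2, 3i+4, 3i+2;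
   block k consists of [0, 6k+2] and of everything from offset a on.  Adding a, b or c
   maps every run into a run, and every nonzero element minus a suitably chosen
   generator is again in H_{13,k}: so H_{13,k} is exactly the monoid generated by {a,b,c}.
   For the permutation property let shift x be 1 on the first two runs of a block,
   0 on the middle two and on the tail, and 2 on the last two.  Along the increasing
   enumeration the phase x + 2 shift x (mod 3) goes up by one at each step, and shift
   only changes after an element of phase 0.  Hence shift is constant on each triple
   g_{3m+1}, g_{3m+2}, g_{3m+3}, and g_{3m+j} = j + shift (mod 3) there. *)

Section Descent.

Variables (S H : nat -> Prop).
Hypothesis S_gt0 : forall s, S s -> 0 < s.
Hypothesis H_0 : H 0.
Hypothesis H_addS : forall x s, H x -> S s -> H (x + s).
Hypothesis H_subS : forall x, H x -> x != 0 -> exists2 s, S s & s <= x /\ H (x - s).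

Lemma descent_addr x y : H x -> H y -> H (x + y).
Proof.
move=> Hx; elim/ltn_ind: y => y IHy Hy.
have [->|y_neq0] := eqVneq y 0; first by rewrite addn0.
have [s Ss [s_le_y Hys]] := H_subS Hy y_neq0.
rewrite -(subnK s_le_y) addnA; apply: (H_addS _ Ss).
by apply: IHy Hys; have := S_gt0 Ss; lia.
Qed.

Lemma descent_submonoid : submonoid H.
Proof. by split=> //; apply: descent_addr. Qed.

Lemma descent_generated x : H x <-> generated S x.
Proof.
split; last first.
  by apply=> [|s Ss]; [exact: descent_submonoid | rewrite -[s]add0n; apply: H_addS].
elim/ltn_ind: x => x IHx Hx M M_sub M_S; have [M_0 M_add] := M_sub.
have [->//|x_neq0] := eqVneq x 0.
have [s Ss [s_le_x Hxs]] := H_subS Hx x_neq0.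
rewrite -(subnK s_le_x); apply: M_add (M_S _ Ss).
by apply: IHx Hxs _ M_sub M_S; have := S_gt0 Ss; lia.
Qed.

End Descent.

Lemma generated_ext (S S' : nat -> Prop) x :
  (forall s, S s <-> S' s) -> generated S x <-> generated S' x.
Proof. by move=> SS'; split=> gen M M_sub M_S; apply: gen => // s /SS'; apply: M_S. Qed.

Section Enumeration.

Variable P : pred nat.
Hypothesis P_0 : P 0.
Hypothesis P_unbounded : forall x, exists y, (x < y) && P y.

Definition next_in x := ex_minn (P_unbounded x).

Lemma next_inP x :
  [/\ x < next_in x, P (next_in x) & forall z, x < z -> P z -> next_in x <= z].
Proof.
rewrite /next_in; case: ex_minnP => y /andP[x_lt_y Py] y_min.
by split=> // z x_lt_z Pz; apply: y_min; rewrite x_lt_z.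
Qed.

Lemma next_in_eq x y : x < y -> P y -> (forall z, x < z < y -> ~~ P z) -> next_in x = y.
Proof.
move=> x_lt_y Py gap; have [x_lt_n Pn n_min] := next_inP x.
apply/eqP; rewrite eqn_leq n_min //= leqNgt; apply/negP => n_lt_y.
by move: (gap (next_in x)); rewrite x_lt_n n_lt_y Pn => /(_ isT).
Qed.

Fixpoint enum_in n := if n is m.+1 then next_in (enum_in m) else 0.

Lemma enum_in_mem n : P (enum_in n).
Proof. by case: n => [|n] //=; case: (next_inP (enum_in n)). Qed.

Lemma enum_in_ltS n : enum_in n < enum_in n.+1.
Proof. by case: (next_inP (enum_in n)). Qed.

Lemma enum_in_lt : {homo enum_in : m n / m < n}.
Proof. by apply: homo_ltn; [exact: ltn_trans | exact: enum_in_ltS]. Qed.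

Lemma enum_in_ge n : n <= enum_in n.
Proof. by elim: n => // n IHn; apply: leq_ltn_trans IHn (enum_in_ltS n). Qed.

Lemma enum_in_surj x : P x -> exists n, enum_in n = x.
Proof.
move=> Px; suff enum_ge n : x <= enum_in n -> exists m, enum_in m = x.
  exact: (enum_ge x (enum_in_ge x)).
elim: n => [|n IHn] x_le; first by exists 0; apply/eqP; rewrite eq_sym -leqn0.
have [|lt_x] := leqP x (enum_in n); first exact: IHn.
exists n.+1; apply/eqP; rewrite eqn_leq x_le andbT.
by case: (next_inP (enum_in n)) => _ _; apply.
Qed.

Lemma enumerates_enum_in : enumerates P enum_in.
Proof.
split=> [|x]; first exact: enum_in_lt.
by split=> [/enum_in_surj | [n <-]] //; apply: enum_in_mem.
Qed.

End Enumeration.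

Lemma perm_iota_rot_mod n t : perm_eq [seq (j + t) %% n | j <- iota 1 n] (iota 0 n).
Proof.
have [->//|n_gt0] := posnP n.
have uniq_s : uniq [seq (j + t) %% n | j <- iota 1 n].
  rewrite map_inj_in_uniq ?iota_uniq // => i j.
  rewrite !mem_iota => /andP[i_ge1 i_le] /andP[j_ge1 j_le].
  by move/eqP; rewrite eqn_modDr -(subnK i_ge1) -(subnK j_ge1) eqn_modDr !modn_small; lia.
apply: (uniq_perm uniq_s (iota_uniq 0 n)).
have [x /mapP[j _ ->]||_ //] := uniq_min_size uniq_s (s2 := iota 0 n).
  by rewrite mem_iota ltn_pmod.
by rewrite size_map !size_iota.
Qed.

Section ResiduesFromPhase.

Variables (n : nat) (g t : nat -> nat).
Hypothesis n_gt0 : 0 < n.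

(* [(n - 1) * t m] is [- t m] modulo [n]: [residue_index] reads [g m = m + t m (mod n)]. *)
Local Notation phase m := ((g m + (n - 1) * t m) %% n).

Hypothesis phase0 : phase 0 = 0.
Hypothesis phase_succ : forall m, phase m.+1 = (phase m).+1 %% n.
Hypothesis t_succ : forall m, t m.+1 = t m \/ phase m = 0.

Lemma phase_index m : phase m = m %% n.
Proof. by elim: m => [|m IHm]; rewrite ?phase0 ?mod0n // phase_succ IHm -addn1 modnDml addn1. Qed.

Lemma residue_index m : g m %% n = (m + t m) %% n.
Proof.
rewrite -[RHS]modnDml -(phase_index m) modnDml -addnA -mulSnr subn1 prednK //.
by rewrite addnC mulnC modnMDl.
Qed.

Lemma t_const_block m j : 0 < j <= n -> t (m * n + j) = t (m * n + 1).
Proof.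
case/andP; elim: j => // j IHj _ j_lt; have [-> //|j_gt0] := posnP j.
rewrite addnS -IHj ?j_gt0 ?(ltnW j_lt) //.
case: (t_succ (m * n + j)) => //; rewrite phase_index modnMDl modn_small ?(ltnW j_lt) //.
by move=> j_eq0; rewrite j_eq0 in j_gt0.
Qed.

Lemma perm_residues_block m : perm_eq [seq g (m * n + j) %% n | j <- iota 1 n] (iota 0 n).
Proof.
have /eq_in_map-> : {in iota 1 n, forall j, g (m * n + j) %% n = (j + t (m * n + 1)) %% n}.
  move=> j; rewrite mem_iota => j_range.
  by rewrite residue_index -addnA modnMDl t_const_block //; lia.
exact: perm_iota_rot_mod.
Qed.

End ResiduesFromPhase.

Section H13.

Variable k : nat.

Local Notation a := (6 * k + 5).
Local Notation b := (9 * k + 6).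
Local Notation c := (9 * k + 7).

Lemma a_ofE : a_of k = a. Proof. by []. Qed.

Lemma b_ofE : b_of k = b. Proof. rewrite /b_of /a_of; lia. Qed.

Lemma c_ofE : c_of k = c. Proof. rewrite /c_of b_ofE; lia. Qed.

Definition in_H13 x : bool :=
  [|| x == 0, has (fun i => I_ik i k x) (iota 0 k.+1) | C_k k x].

Lemma in_H13P x : reflect (H13 k x) (in_H13 x).
Proof.
apply: (iffP or3P) => [[/eqP->|/hasP[i]|Cx]|[->|[[i i_le Ii]|Cx]]].
- by left.
- by rewrite mem_iota ltnS => /andP[_ i_le] Ii; right; left; exists i.
- by right; right.
- exact: Or31.
- by apply: Or32; apply/hasP; exists i; rewrite ?mem_iota ?ltnS.
- exact: Or33.
Qed.

Lemma in_H13_0 : in_H13 0.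
Proof. by []. Qed.

Definition block_start i := a + 2 * b * i.

Lemma block_startS i : block_start i.+1 = block_start i + 2 * b.
Proof. by rewrite /block_start; lia. Qed.

Lemma block_start_lt i j : i < j -> block_start i + 2 * b <= block_start j.
Proof. by move=> lt_ij; have := leq_mul lt_ij (leqnn (2 * b)); rewrite /block_start; lia. Qed.

(* Block [i] of H13 seen from [block_start i]: the runs of A_{i,k} start at the offsets
   [0], [b - a], [a] and those of B_{i,k} at [b], [2b - a], [a + b]; [in_tail] is C. *)
Definition in_runs i r : bool :=
  [|| r <= 3 * i, 3 * k + 1 <= r <= 3 * k + 2 + 3 * i, a <= r <= a + 3 * i,
      b <= r <= b + 1 + 3 * i, 12 * k + 7 <= r <= 12 * k + 10 + 3 * i
    | 15 * k + 11 <= r <= 15 * k + 12 + 3 * i].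

Definition in_tail i r : bool := (k < i) || (i == k) && (a <= r).

Definition in_block i r : bool := in_tail i r || in_runs i r.

Lemma I_ikE i x : I_ik i k x = (block_start i <= x) && in_runs i (x - block_start i).
Proof. by rewrite /I_ik /A_ik /B_ik /in_shift /in_runs /block_start a_ofE b_ofE; lia. Qed.

Lemma C_kE x : C_k k x = (block_start k + a <= x).
Proof. by rewrite /C_k /block_start a_ofE b_ofE; lia. Qed.

Lemma in_runs_le i r : i <= k -> in_runs i r -> r <= 2 * b.
Proof. by rewrite /in_runs; lia. Qed.

Lemma in_H13_block i x : block_start i <= x < block_start i + 2 * b ->
  in_H13 x = in_block i (x - block_start i).
Proof.
move=> /andP[lo hi]; apply/idP/idP.
- case/or3P => [/eqP x0|/hasP[j]|].
  + by move: lo; rewrite x0 /block_start; lia.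
  + rewrite mem_iota I_ikE ltnS => /andP[_ j_le] /andP[start_j_le runs_j].
    case: (ltngtP j i) => [/block_start_lt|/block_start_lt|<-];
      last by rewrite /in_block runs_j orbT.
      by have := in_runs_le j_le runs_j; rewrite /in_block /in_runs; lia.
    by lia.
  + rewrite C_kE /in_block /in_tail => Cx.
    case: (ltngtP i k) => [/block_start_lt | _ | ->]; lia.
- case/orP => [|runs_i].
  + move=> tail; apply/or3P/Or33; rewrite C_kE; move: tail; rewrite /in_tail.
    by case: (ltngtP i k) => [|/block_start_lt|->]; lia.
  + have [k_lt_i|i_le_k] := ltnP k i.
      by apply/or3P/Or33; rewrite C_kE; have := block_start_lt k_lt_i; lia.
    apply/or3P/Or32/hasP; exists i; first by rewrite mem_iota ltnS.
    by rewrite I_ikE lo.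
Qed.

Lemma in_H13_lt_a x : x < a -> in_H13 x = (x == 0).
Proof.
move=> x_lt; apply/or3P/eqP => [[/eqP //|/hasP[j _]|]|->]; last exact: Or31.
  by rewrite I_ikE /block_start; lia.
by rewrite C_kE /block_start; lia.
Qed.

Lemma in_H13_ge_a x : in_H13 x -> x != 0 -> a <= x.
Proof. by move=> Hx x_neq0; rewrite leqNgt; apply: contraL Hx => /in_H13_lt_a->. Qed.

Lemma block_of x : a <= x -> exists i, block_start i <= x < block_start i + 2 * b.
Proof.
move=> a_le; exists ((x - a) %/ (2 * b)).
have := divn_eq (x - a) (2 * b); have := @ltn_pmod (x - a) (2 * b) ltac:(lia).
by rewrite /block_start mulnC; lia.
Qed.

Lemma in_H13_unbounded x : exists y, (x < y) && in_H13 y.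
Proof.
exists (x.+1 + block_start k + a); apply/andP; split; first lia.
by apply/or3P/Or33; rewrite C_kE; lia.
Qed.

Lemma in_block_tail i r : in_tail i r -> in_block i r.
Proof. by rewrite /in_block => ->. Qed.

Lemma in_block_A0 i r : r <= 3 * i -> in_block i r.
Proof. by move=> h; rewrite /in_block /in_runs h orbT. Qed.

Lemma in_block_A1 i r : 3 * k + 1 <= r <= 3 * k + 2 + 3 * i -> in_block i r.
Proof. by move=> h; rewrite /in_block /in_runs h !orbT. Qed.

Lemma in_block_A2 i r : a <= r <= a + 3 * i -> in_block i r.
Proof. by move=> h; rewrite /in_block /in_runs h !orbT. Qed.

Lemma in_block_B0 i r : b <= r <= b + 1 + 3 * i -> in_block i r.
Proof. by move=> h; rewrite /in_block /in_runs h !orbT. Qed.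

Lemma in_block_B1 i r : 12 * k + 7 <= r <= 12 * k + 10 + 3 * i -> in_block i r.
Proof. by move=> h; rewrite /in_block /in_runs h !orbT. Qed.

Lemma in_block_B2 i r : 15 * k + 11 <= r <= 15 * k + 12 + 3 * i -> in_block i r.
Proof. by move=> h; rewrite /in_block /in_runs h !orbT. Qed.

Definition is_gen s : bool := [|| s == a, s == b | s == c].

Lemma S_ofP s : S_of k s <-> is_gen s.
Proof. by rewrite /S_of /is_gen a_ofE b_ofE c_ofE; split; lia. Qed.

Lemma in_block_addS i r s : r < 2 * b -> in_block i r -> is_gen s ->
  if r + s < 2 * b then in_block i (r + s) else in_block i.+1 (r + s - 2 * b).
Proof. by rewrite /in_block /in_tail /in_runs /is_gen; case: ifP; lia. Qed.

Lemma in_H13_addS x s : in_H13 x -> is_gen s -> in_H13 (x + s).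
Proof.
move=> Hx gen_s; have [->|x_neq0] := eqVneq x 0.
  have s_blk : block_start 0 <= s < block_start 0 + 2 * b.
    by move: gen_s; rewrite /is_gen /block_start; lia.
  rewrite add0n (in_H13_block s_blk).
  by case/or3P: gen_s => /eqP->; [apply: in_block_A0 | apply: in_block_A1 | apply: in_block_A1];
    rewrite /block_start; lia.
have [i blk] := block_of (in_H13_ge_a Hx x_neq0).
move: Hx; rewrite (in_H13_block blk) => inb.
have r_lt : x - block_start i < 2 * b by lia.
have := in_block_addS r_lt inb gen_s; case: ifP => blk' inb'.
  rewrite (in_H13_block (i := i)); last lia.
  by have -> : x + s - block_start i = x - block_start i + s by lia.
rewrite (in_H13_block (i := i.+1)) block_startS; last by move: gen_s; rewrite /is_gen; lia.
by have -> : x + s - (block_start i + 2 * b) = x - block_start i + s - 2 * b by lia.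
Qed.

Lemma H13_0 : H13 k 0.
Proof. exact/in_H13P/in_H13_0. Qed.

Lemma S_of_gt0 s : S_of k s -> 0 < s.
Proof. by rewrite S_ofP /is_gen; lia. Qed.

Lemma H13_addS x s : H13 k x -> S_of k s -> H13 k (x + s).
Proof. by move=> /in_H13P Hx /S_ofP gen_s; apply/in_H13P/in_H13_addS. Qed.

Lemma H13_cofinite : cofinite (H13 k).
Proof. by exists (2 * a_of k + 2 * k * b_of k) => x x_ge; right; right. Qed.

Hypothesis k_gt0 : 0 < k.

Definition sub_gen_ok i r s :=
  [\/ s <= r /\ in_block i (r - s), [/\ 0 < i, r < s & in_block i.-1 (r + 2 * b - s)]
    | i = 0 /\ r + a = s].

Lemma is_gen_abc : [/\ is_gen a, is_gen b & is_gen c].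
Proof. by rewrite /is_gen !eqxx !orbT. Qed.

Lemma in_tail_subS i r : r < 2 * b -> in_tail i r -> exists2 s, is_gen s & sub_gen_ok i r s.
Proof.
have [gen_a gen_b _] := is_gen_abc.
move=> r_lt /orP[k_lt_i|/andP[/eqP i_k a_le]].
  exists a => //; have [a_le|r_lt_a] := leqP a r.
    by apply: Or31; split=> //; apply: in_block_tail; rewrite /in_tail k_lt_i.
  by apply: Or32; split; [lia | lia | apply: in_block_tail; rewrite /in_tail; lia].
have [r_mid|r_side] := boolP (12 * k + 7 < r < 12 * k + 10).
  by exists b => //; apply: Or31; split; [lia | apply: in_block_A1; lia].
exists a => //; apply: Or31; split=> //.
have [r_le|r_gt] := leqP r (12 * k + 7); last by apply: in_block_tail; rewrite /in_tail; lia.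
by have [r_le'|r_gt'] := leqP r (9 * k + 5); [apply: in_block_A0 | apply: in_block_A1]; lia.
Qed.

Lemma in_runs_subS i r : i <= k -> in_runs i r -> exists2 s, is_gen s & sub_gen_ok i r s.
Proof.
have [gen_a gen_b gen_c] := is_gen_abc.
have prev s : r < s -> (i = 0 -> r + a = s) -> (0 < i -> in_block i.-1 (r + 2 * b - s)) ->
    sub_gen_ok i r s.
  move=> r_lt_s r_eq prev_in; have [i0|i_gt0] := posnP i.
    by apply: Or33; split; last exact: r_eq.
  by apply: Or32; split; last exact: prev_in.
move=> i_le_k; case/orP=> [A0|/orP[A1|/orP[A2|/orP[B0|/orP[B1|B2]]]]].
- by exists a => //; apply: prev => [||i_gt0]; [lia | lia | apply: in_block_B1; lia].
- have [r_le|r_gt] := leqP r (3 * k + 1 + 3 * i).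
    by exists b => //; apply: prev => [||i_gt0]; [lia | lia | apply: in_block_B1; lia].
  by exists c => //; apply: prev => [||i_gt0]; [lia | lia | apply: in_block_B1; lia].
- by exists a => //; apply: Or31; split; [lia | apply: in_block_A0; lia].
- have [r_le|r_gt] := leqP r (b + 3 * i).
    by exists b => //; apply: Or31; split; [lia | apply: in_block_A0; lia].
  by exists c => //; apply: Or31; split; [lia | apply: in_block_A0; lia].
- have [r_le|r_gt] := leqP r (12 * k + 8 + 3 * i).
    by exists b => //; apply: Or31; split; [lia | apply: in_block_A1; lia].
  have [r_le'|r_gt'] := leqP r (12 * k + 9 + 3 * i).
    by exists c => //; apply: Or31; split; [lia | apply: in_block_A1; lia].
  by exists a => //; apply: Or31; split; [lia | apply: in_block_A2; lia].
- by exists a => //; apply: Or31; split; [lia | apply: in_block_B0; lia].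
Qed.

Lemma in_block_subS i r : r < 2 * b -> in_block i r -> exists2 s, is_gen s & sub_gen_ok i r s.
Proof.
move=> r_lt /orP[/(in_tail_subS r_lt) // | runs].
have [k_lt_i|i_le_k] := ltnP k i; last exact: in_runs_subS.
by apply: in_tail_subS; rewrite /in_tail ?k_lt_i.
Qed.

Lemma in_H13_subS x : in_H13 x -> x != 0 -> exists2 s, is_gen s & s <= x /\ in_H13 (x - s).
Proof.
move=> Hx x_neq0; have [i blk] := block_of (in_H13_ge_a Hx x_neq0).
move: Hx; rewrite (in_H13_block blk) => inb.
have r_lt : x - block_start i < 2 * b by lia.
have [s gen_s [[s_le inb'] | [i_gt0 r_lt_s inb'] | [i0 x_eq]]] := in_block_subS r_lt inb.
- exists s => //; split; first lia.
  rewrite (in_H13_block (i := i)); last lia.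
  by have -> : x - s - block_start i = x - block_start i - s by lia.
- have start_i : block_start i = block_start i.-1 + 2 * b by rewrite -block_startS prednK.
  have s_lt : s < 2 * b by move: gen_s; rewrite /is_gen; lia.
  exists s => //; split; first lia.
  rewrite (in_H13_block (i := i.-1)); last lia.
  by have -> : x - s - block_start i.-1 = x - block_start i + 2 * b - s by lia.
- have -> : x = s by move: blk x_eq; rewrite i0 /block_start; lia.
  by exists s; rewrite ?subnn.
Qed.

Lemma H13_subS x : H13 k x -> x != 0 -> exists2 s, S_of k s & s <= x /\ H13 k (x - s).
Proof.
move=> /in_H13P Hx x_neq0; have [s /S_ofP gen_s [s_le /in_H13P]] := in_H13_subS Hx x_neq0.
by exists s.
Qed.

Lemma H13_submonoid : submonoid (H13 k).
Proof. exact: descent_submonoid S_of_gt0 H13_0 H13_addS H13_subS. Qed.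

Lemma H13_generated x : H13 k x <-> generated (S_of k) x.
Proof. exact: descent_generated S_of_gt0 H13_0 H13_addS H13_subS x. Qed.

Definition block_shift i r : nat :=
  if in_tail i r then 0 else if r < a then 1 else if r < 12 * k + 7 then 0 else 2.

Variant block_shift_spec i r : nat -> Type :=
  | BlockShiftTail of in_tail i r : block_shift_spec i r 0
  | BlockShiftLow of ~~ in_tail i r & r < a : block_shift_spec i r 1
  | BlockShiftMid of ~~ in_tail i r & a <= r < 12 * k + 7 : block_shift_spec i r 0
  | BlockShiftHigh of ~~ in_tail i r & 12 * k + 7 <= r : block_shift_spec i r 2.

Lemma block_shiftP i r : block_shift_spec i r (block_shift i r).
Proof.
rewrite /block_shift; case: ifP => [|tail]; first exact: BlockShiftTail.
case: ltnP => [|a_le]; first exact: BlockShiftLow (negbT tail).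
case: ltnP => [r_lt|r_ge]; first by apply: BlockShiftMid; rewrite ?tail ?a_le.
by apply: BlockShiftHigh; rewrite ?tail.
Qed.

Definition block_index x := (x - a) %/ (2 * b).

Lemma block_indexE i x : block_start i <= x < block_start i + 2 * b -> block_index x = i.
Proof.
move=> blk; rewrite /block_index.
have -> : x - a = i * (2 * b) + (x - block_start i) by rewrite /block_start in blk *; lia.
by rewrite divnMDl ?divn_small ?addn0 //; lia.
Qed.

Definition shift x :=
  if x < a then 0 else block_shift (block_index x) (x - block_start (block_index x)).

Definition phase x := (x + 2 * shift x) %% 3.

Definition bphase i r := (2 + r + 2 * block_shift i r) %% 3.

Lemma shift_0 : shift 0 = 0.
Proof. by rewrite /shift; case: ifP => //; lia. Qed.

Lemma shift_block i x : block_start i <= x < block_start i + 2 * b ->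
  shift x = block_shift i (x - block_start i).
Proof.
by move=> blk; rewrite /shift (block_indexE blk) ifF //; rewrite /block_start in blk; lia.
Qed.

Lemma phase_block i x : block_start i <= x < block_start i + 2 * b ->
  phase x = bphase i (x - block_start i).
Proof.
move=> blk; have start_mod3 : block_start i %% 3 = 2 by rewrite /block_start; lia.
by rewrite /phase /bphase (shift_block blk); lia.
Qed.

Local Notation next := (next_in in_H13_unbounded).

Lemma shift_succ x : in_H13 x -> in_H13 x.+1 -> x != 0 -> shift x.+1 = shift x.
Proof.
move=> Hx Hx1 x_neq0; have [i blk] := block_of (in_H13_ge_a Hx x_neq0).
move: Hx; rewrite (shift_block blk) (in_H13_block blk).
have [blk1|edge] : x.+1 < block_start i + 2 * b \/ x.+1 = block_start i + 2 * b by lia.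
  move: Hx1; rewrite (shift_block (i := i)) ?(in_H13_block (i := i)); try lia.
  have -> : x.+1 - block_start i = (x - block_start i).+1 by lia.
  by case: block_shiftP; case: block_shiftP; rewrite /in_block /in_tail /in_runs; lia.
move=> inb; have tail : in_tail i (x - block_start i).
  by move: inb; rewrite /in_block /in_tail /in_runs; lia.
rewrite /block_shift tail (shift_block (i := i.+1)) block_startS edge ?subnn; last lia.
by rewrite /block_shift (_ : in_tail i.+1 0) //; move: tail; rewrite /in_tail; lia.
Qed.

Definition phase_step x y := phase y = (phase x).+1 %% 3 /\ (shift y = shift x \/ phase x = 0).

Lemma phase_step_succ x : in_H13 x -> in_H13 x.+1 -> phase_step x (next x).
Proof.
move=> Hx Hx1; have x_neq0 : x != 0 by apply: contraTneq Hx1 => ->; rewrite in_H13_lt_a //; lia.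
rewrite (next_in_eq _ (y := x.+1)) // => [|z]; last lia.
by rewrite /phase_step /phase shift_succ //; split; [lia | left].
Qed.

Lemma phase_step_within i r r' : r < r' < 2 * b -> in_block i r' ->
  (forall q, r < q < r' -> ~~ in_block i q) ->
  bphase i r' = (bphase i r).+1 %% 3 -> block_shift i r' = block_shift i r \/ bphase i r = 0 ->
  phase_step (block_start i + r) (next (block_start i + r)).
Proof.
move=> rr' inb' gap bph bsh.
have blk q : q < 2 * b -> block_start i <= block_start i + q < block_start i + 2 * b by lia.
have [blk_r blk_r'] : (r < 2 * b) /\ (r' < 2 * b) by lia.
rewrite (next_in_eq _ (y := block_start i + r')) ?(in_H13_block (blk _ blk_r')) ?addKn //; try lia.
  rewrite /phase_step (phase_block (blk _ blk_r)) (phase_block (blk _ blk_r')).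
  by rewrite (shift_block (blk _ blk_r)) (shift_block (blk _ blk_r')) !addKn.
move=> z /andP[z_gt z_lt]; rewrite (in_H13_block (i := i)); last lia.
by apply: gap; lia.
Qed.

Lemma phase_step_across i r : r < 2 * b -> (forall q, r < q < 2 * b -> ~~ in_block i q) ->
  bphase i.+1 0 = (bphase i r).+1 %% 3 -> block_shift i.+1 0 = block_shift i r \/ bphase i r = 0 ->
  phase_step (block_start i + r) (next (block_start i + r)).
Proof.
move=> r_lt gap bph bsh.
have blk_r : block_start i <= block_start i + r < block_start i + 2 * b by lia.
have blk_next : block_start i.+1 <= block_start i.+1 < block_start i.+1 + 2 * b by lia.
rewrite (next_in_eq _ (y := block_start i.+1)) ?(in_H13_block blk_next) ?subnn ?in_block_A0 //.
- rewrite /phase_step (phase_block blk_r) (phase_block blk_next).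
  by rewrite (shift_block blk_r) (shift_block blk_next) subnn addKn.
- by rewrite block_startS; lia.
move=> z /andP[z_gt]; rewrite block_startS => z_lt.
by rewrite (in_H13_block (i := i)); [apply: gap | ]; lia.
Qed.

Ltac gap_lia := move=> q ?; rewrite /in_block /in_tail /in_runs; lia.
Ltac shift_lia := rewrite /bphase; case: block_shiftP; case: block_shiftP; rewrite /in_tail; lia.


Lemma phase_step_run_end i r : ~~ in_tail i r -> in_runs i r -> ~~ in_block i r.+1 ->
  phase_step (block_start i + r) (next (block_start i + r)).
Proof.
rewrite /in_tail => not_tail + not_inb1.
case/orP=> [A0|/orP[A1|/orP[A2|/orP[B0|/orP[B1|B2]]]]].
- have r_end : 3 * i <= r.
    by rewrite leqNgt; apply: contra not_inb1 => ?; apply: in_block_A0; lia.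
  have i_lt_k : i < k by rewrite ltnNge; apply: contra not_inb1 => ?; apply: in_block_A1; lia.
  by apply: (phase_step_within (r' := 3 * k + 1));
    [lia | apply: in_block_A1; lia | gap_lia | shift_lia ..].
- have r_end : 3 * k + 2 + 3 * i <= r.
    by rewrite leqNgt; apply: contra not_inb1 => ?; apply: in_block_A1; lia.
  by apply: (phase_step_within (r' := a));
    [lia | apply: in_block_A2; lia | gap_lia | shift_lia ..].
- have r_end : a + 3 * i <= r.
    by rewrite leqNgt; apply: contra not_inb1 => ?; apply: in_block_A2; lia.
  by apply: (phase_step_within (r' := b));
    [lia | apply: in_block_B0; lia | gap_lia | shift_lia ..].
- have r_end : b + 1 + 3 * i <= r.
    by rewrite leqNgt; apply: contra not_inb1 => ?; apply: in_block_B0; lia.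
  by apply: (phase_step_within (r' := 12 * k + 7));
    [lia | apply: in_block_B1; lia | gap_lia | shift_lia ..].
- have r_end : 12 * k + 10 + 3 * i <= r.
    by rewrite leqNgt; apply: contra not_inb1 => ?; apply: in_block_B1; lia.
  by apply: (phase_step_within (r' := 15 * k + 11));
    [lia | apply: in_block_B2; lia | gap_lia | shift_lia ..].
- have r_end : 15 * k + 12 + 3 * i <= r.
    by rewrite leqNgt; apply: contra not_inb1 => ?; apply: in_block_B2; lia.
  by apply: phase_step_across; [lia | gap_lia | shift_lia ..].
Qed.

Lemma phase_step_gap x : in_H13 x -> ~~ in_H13 x.+1 -> x != 0 -> phase_step x (next x).
Proof.
move=> Hx Hx1 x_neq0; have [i blk] := block_of (in_H13_ge_a Hx x_neq0).
have [r r_lt x_eq] : exists2 r, r < 2 * b & x = block_start i + r.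
  by exists (x - block_start i); lia.
subst x.
have r1_lt : r.+1 < 2 * b.
  rewrite ltn_neqAle r_lt andbT; apply: contraNneq Hx1 => r1_eq.
  rewrite -addnS r1_eq -block_startS (in_H13_block (i := i.+1)) ?subnn ?in_block_A0 //; lia.
move: Hx Hx1; rewrite -addnS !(in_H13_block (i := i)) ?addKn; try lia.
move=> inb not_inb1; have not_tail : ~~ in_tail i r.
  by apply: contra not_inb1 => tail; apply: in_block_tail; move: tail; rewrite /in_tail; lia.
by apply: phase_step_run_end => //; move: inb; rewrite /in_block (negbTE not_tail).
Qed.

Lemma next_0 : next 0 = a.
Proof.
have blk_a : block_start 0 <= a < block_start 0 + 2 * b by rewrite /block_start; lia.
rewrite (next_in_eq _ (y := a)) ?(in_H13_block blk_a) ?in_block_A0 //;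
  try by rewrite /block_start; lia.
by move=> z /andP[z_gt z_lt]; rewrite in_H13_lt_a //; lia.
Qed.

Lemma phase_step_next x : in_H13 x -> phase_step x (next x).
Proof.
move=> Hx; have [->|x_neq0] := eqVneq x 0; last first.
  by have [Hx1|Hx1] := boolP (in_H13 x.+1); [apply: phase_step_succ | apply: phase_step_gap].
have blk_a : block_start 0 <= a < block_start 0 + 2 * b by rewrite /block_start; lia.
rewrite next_0 /phase_step (phase_block blk_a) /phase /bphase shift_0.
by case: block_shiftP; rewrite /in_tail /block_start; lia.
Qed.

Local Notation enum := (enum_in in_H13_unbounded).

Lemma perm_residues_H13 m : perm_eq [seq enum (m * 3 + j) %% 3 | j <- iota 1 3] (iota 0 3).
Proof.
apply: (perm_residues_block (t := shift \o enum)) => //= [|m'|m']; first by rewrite shift_0.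
  by case: (phase_step_next (enum_in_mem in_H13_0 in_H13_unbounded m')).
by case: (phase_step_next (enum_in_mem in_H13_0 in_H13_unbounded m')) => _ [->|]; [left | right].
Qed.

Lemma enum_H13_gens : [/\ enum 1 = a, enum 2 = b & enum 3 = c].
Proof.
have blk0 x : a <= x < a + 2 * b -> block_start 0 <= x < block_start 0 + 2 * b.
  by rewrite /block_start; lia.
have enum1 : enum 1 = a by exact: next_0.
have enum2 : enum 2 = b.
  rewrite /= -/(enum 1) enum1 (next_in_eq _ (y := b)) // ?(in_H13_block (blk0 _ _)) ?in_block_A1 //;
    try by rewrite /block_start; lia.
  move=> z /andP[z_gt z_lt]; rewrite (in_H13_block (blk0 z _)); last lia.
  by rewrite /in_block /in_tail /in_runs /block_start; lia.
split=> //; rewrite /= -/(enum 2) enum2 (next_in_eq _ (y := c)) //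
  ?(in_H13_block (blk0 _ _)) ?in_block_A1 //; try by rewrite /block_start; lia.
Qed.

Lemma enumerates_H13 : enumerates (H13 k) enum.
Proof.
have [enum_lt enum_mem] := enumerates_enum_in in_H13_0 in_H13_unbounded.
by split=> // x; rewrite -enum_mem; apply: rwP; apply: in_H13P.
Qed.

Lemma enum_H13_S_of s : (exists2 j, 0 < j <= 3 & enum j = s) <-> S_of k s.
Proof.
have [enum1 enum2 enum3] := enum_H13_gens; rewrite S_ofP /is_gen; split.
  by case=> [[|[|[|[|j]]]] // _ <-]; rewrite ?enum1 ?enum2 ?enum3 eqxx ?orbT.
by case/or3P=> /eqP->; [exists 1 | exists 2 | exists 3].
Qed.

End H13.

Theorem lemma4p13 (k : nat) (hk : 0 < k) :
  (submonoid (H13 k) /\ cofinite (H13 k) /\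
   (forall x, H13 k x -> generated (S_of k) x) /\
   (forall s, S_of k s -> H13 k s))
  /\ perm_num_semigroup 3 (H13 k).
Proof.
have [H_sub H_cof] := (H13_submonoid hk, H13_cofinite k).
have H_gen x : H13 k x <-> generated (S_of k) x := H13_generated hk x.
split.
  do 3 (split=> //); first by move=> x /H_gen.
  by move=> s S_s; rewrite -[s]add0n; apply: H13_addS (H13_0 k) S_s.
split=> //; exists (enum_in (in_H13_unbounded k)); split; first exact: enumerates_H13.
split; last exact: perm_residues_H13.
by move=> x; rewrite H_gen; apply: generated_ext => s; rewrite enum_H13_S_of.
Qed.
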